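(* For any integers $x_1\ge x_2\ge1$ and any $n\ge0$, \[ p_n(x_1,x_2)\ge p_n(x_1+1,x_2-1),\qquad q_n(x_1,x_2)\ge q_n(x_1+1,x_2-1). \]
   Context: Here $p_k,q_k:\mathbf N^2\to\mathbf N$ ($\mathbf N$ the non-negative integers) are defined by the generating functions $\sum_{\mathbf x\in\mathbf N^2}\sum_{k\ge0}p_k(\mathbf x)t^{\mathbf x}u^k=\prod_{\mathbf x\in\mathbf N^2}(1-t^{\mathbf x}u)^{-1}$ and $\sum_{\mathbf x\in\mathbf N^2}\sum_{k\ge0}q_k(\mathbf x)t^{\mathbf x}u^k=\prod_{\mathbf x\in\mathbf N^2}(1+t^{\mathbf x}u)$, where $t^{(a,b)}=t_1^at_2^b$. Equivalently, $p_k(\mathbf x)$ is the number of vector partitions of $\mathbf x$ (unordered decompositions $\mathbf x=\mathbf x_1+\dots+\mathbf x_j$ with $\mathbf x_i\in\mathbf N^2\setminus\{\mathbf 0\}$) with at most $k$ parts, and $q_k(\mathbf x)$ is the number of vector partitions of $\mathbf x$ into exactly $k$ or $k-1$ distinct parts. *)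

From mathcomp Require Import all_boot.
Set Implicit Arguments. Unset Strict Implicit. Unset Printing Implicit Defensive.

Definition vsum (s : seq (nat * nat)) : nat * nat :=
  (sumn (map fst s), sumn (map snd s)).

(* lexicographic orders on N^2, used to pick a canonical representative
   (a sorted list) of each multiset / set of vectors *)
Definition lexle (u v : nat * nat) : bool :=
  (u.1 < v.1) || ((u.1 == v.1) && (u.2 <= v.2)).
Definition lexlt (u v : nat * nat) : bool :=
  (u.1 < v.1) || ((u.1 == v.1) && (u.2 < v.2)).

(* Every summand of x lies in the box [0,x.1] x [0,x.2]. *)
Definition box (x : nat * nat) : finType :=
  ('I_(x.1.+1) * 'I_(x.2.+1))%type.

Definition vec_of (x : nat * nat) (i : box x) : nat * nat :=
  (nat_of_ord i.1, nat_of_ord i.2).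

(* p k x = coefficient of t^x u^k in prod_{y in N^2} (1 - t^y u)^{-1}
         = number of multisets of exactly k vectors of N^2 (0 allowed)
           summing to x, represented as lex-nondecreasing k-tuples. *)
Definition p (k : nat) (x : nat * nat) : nat :=
  #|[set t : k.-tuple (box x) |
      sorted lexle (map (@vec_of x) t) && (vsum (map (@vec_of x) t) == x)]|.

(* q k x = coefficient of t^x u^k in prod_{y in N^2} (1 + t^y u)
         = number of sets of exactly k distinct vectors of N^2 (0 allowed)
           summing to x, represented as lex-increasing k-tuples. *)
Definition q (k : nat) (x : nat * nat) : nat :=
  #|[set t : k.-tuple (box x) |
      sorted lexlt (map (@vec_of x) t) && (vsum (map (@vec_of x) t) == x)]|.

(* Identify f : n.-tuple (nat * nat) -> R with the formal sum of the
   f(s) * prod_i u_i^(s_i.1) v_i^(s_i.2).  Then [op moveE] and [op moveF] are the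
   derivations E = sum_i u_i d/dv_i and F = sum_i v_i d/du_i, and [E, F] multiplies
   the part of bidegree (X, Y) by X - Y.  On that part E is nilpotent and
   F E^(k+1) f = -(k+1)(X - Y + k) E^k f when F f = 0, so F is injective there as
   soon as X > Y.  Both operators commute with permutations of the n indices, hence
   F maps the symmetric (resp. alternating) functions of bidegree (X + 1, Y)
   injectively into those of bidegree (X, Y + 1) when Y <= X.  These spaces have
   bases indexed by the multisets (resp. sets) of n vectors with the given sum,
   which p_n (resp. q_n) counts. *)

From mathcomp Require Import all_boot all_algebra all_fingroup.
From mathcomp Require Import ring zify.
Set Implicit Arguments. Unset Strict Implicit. Unset Printing Implicit Defensive.
Import GRing.Theory Num.Theory.

Open Scope ring_scope.

Lemma sum_neq0 (V : nmodType) (I : finType) (F : I -> V) :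
  \sum_i F i != 0 -> exists i, F i != 0.
Proof.
move=> sumF_neq0; apply/existsP; apply: contraNT sumF_neq0 => /existsPn F0.
by rewrite big1 // => i _; apply/eqP/negPn/F0.
Qed.

Lemma leq_card_row_indep (F : fieldType) (A B : finType) (M : A -> B -> F) :
  (forall u : A -> F, (forall b, \sum_a u a * M a b = 0) -> u =1 (fun=> 0)) ->
  (#|A| <= #|B|)%N.
Proof.
move=> indep; pose N := \matrix_(i < #|A|, j < #|B|) M (enum_val i) (enum_val j).
suff /eqP <- : row_free N by apply: rank_leq_col.
apply/inj_row_free => v vN0; apply/rowP => i; rewrite mxE.
suff indep_v b : \sum_a v 0 (enum_rank a) * M a b = 0.
  by have := indep _ indep_v (enum_val i); rewrite enum_valK.
have /rowP/(_ (enum_rank b)) := vN0; rewrite !mxE => /(etrans _); apply.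
rewrite (reindex (fun k : 'I_#|A| => enum_val k)) /=; last first.
  by exists enum_rank => a _; rewrite ?enum_valK ?enum_rankK.
by apply: eq_bigr => k _; rewrite mxE enum_rankK enum_valK.
Qed.

Lemma vec_of_inj x : injective (@vec_of x).
Proof. by move=> [a b] [c d] [/val_inj-> /val_inj->]. Qed.

Lemma lexle_trans : transitive lexle.
Proof. by move=> [a b] [c d] [e f]; rewrite /lexle /=; lia. Qed.

Lemma lexle_anti : antisymmetric lexle.
Proof. by move=> [a b] [c d]; rewrite /lexle /= => h; apply/eqP; rewrite xpair_eqE; lia. Qed.

Lemma lexle_total : total lexle.
Proof. by move=> [a b] [c d]; rewrite /lexle /=; lia. Qed.

Lemma lexlt_trans : transitive lexlt.
Proof. by move=> [a b] [c d] [e f]; rewrite /lexlt /=; lia. Qed.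

Lemma lexlt_irr : irreflexive lexlt.
Proof. by move=> [a b]; rewrite /lexlt /=; lia. Qed.

Lemma lexlt_le : subrel lexlt lexle.
Proof. by move=> [a b] [c d]; rewrite /lexle /lexlt /=; lia. Qed.

Lemma sorted_lexlt s : sorted lexle s -> uniq s -> sorted lexlt s.
Proof.
elim: s => // u [|v s] IH //= /andP[le_uv le_s] /andP[u_notin uniq_s].
apply/andP; split; last exact: IH.
move: le_uv u_notin {IH le_s uniq_s}; rewrite /lexle /lexlt inE negb_or.
by case: u v => [a b] [c d] /=; rewrite xpair_eqE; lia.
Qed.

Section Configurations.

Variable n : nat.
Local Notation cfg := (n.-tuple (nat * nat)).
Implicit Types (s : cfg) (i j : 'I_n) (y : nat * nat).

Definition set_tnth s i y : cfg := [tuple if j == i then y else tnth s j | j < n].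

Lemma tnth_set_tnth s i y j : tnth (set_tnth s i y) j = if j == i then y else tnth s j.
Proof. by rewrite tnth_mktuple. Qed.

Lemma set_set_tnth s i y y' : set_tnth (set_tnth s i y) i y' = set_tnth s i y'.
Proof. by apply: eq_from_tnth => j; rewrite !tnth_set_tnth; case: (j == i). Qed.

Lemma set_tnth_id s i : set_tnth s i (tnth s i) = s.
Proof. by apply: eq_from_tnth => j; rewrite tnth_set_tnth; case: eqP => [->|]. Qed.

Lemma set_tnthC s i j y y' :
  i != j -> set_tnth (set_tnth s i y) j y' = set_tnth (set_tnth s j y') i y.
Proof.
move=> ij; apply: eq_from_tnth => k; rewrite !tnth_set_tnth.
by case: (eqVneq k j) => [->|//]; rewrite eq_sym (negbTE ij).
Qed.

Lemma sum_set_tnth (pr : nat * nat -> nat) s i y :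
  (\sum_j pr (tnth (set_tnth s i y) j) + pr (tnth s i) =
   \sum_j pr (tnth s j) + pr y)%N.
Proof.
rewrite (bigD1 i) // [in RHS](bigD1 i) //= tnth_set_tnth eqxx.
rewrite (eq_bigr (fun j => pr (tnth s j))) => [|j /negbTE ji]; last by rewrite tnth_set_tnth ji.
lia.
Qed.

Lemma vsum_tuple s : vsum s = (\sum_i (tnth s i).1, \sum_i (tnth s i).2)%N.
Proof. by rewrite /vsum !sumnE !big_map !big_tuple. Qed.

Lemma vsum_set_tnth s i y :
  ((vsum (set_tnth s i y)).1 + (tnth s i).1 = (vsum s).1 + y.1)%N /\
  ((vsum (set_tnth s i y)).2 + (tnth s i).2 = (vsum s).2 + y.2)%N.
Proof. by rewrite !vsum_tuple; split; apply: sum_set_tnth. Qed.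

Definition act (sg : {perm 'I_n}) s : cfg := [tuple tnth s (sg i) | i < n].

Lemma tnth_act sg s i : tnth (act sg s) i = tnth s (sg i).
Proof. by rewrite tnth_mktuple. Qed.

Lemma act_mul sg tau s : act tau (act sg s) = act (tau * sg)%g s.
Proof. by apply: eq_from_tnth => i; rewrite !tnth_act permM. Qed.

Lemma act1 s : act 1%g s = s.
Proof. by apply: eq_from_tnth => i; rewrite tnth_act perm1. Qed.

Lemma actK sg : cancel (act sg) (act sg^-1).
Proof. by move=> s; rewrite act_mul mulVg act1. Qed.

Lemma set_tnth_act sg s i y : set_tnth (act sg s) i y = act sg (set_tnth s (sg i) y).
Proof.
by apply: eq_from_tnth => j; rewrite !(tnth_act, tnth_set_tnth) (inj_eq perm_inj).
Qed.

Lemma perm_eq_act sg s : perm_eq (act sg s) s.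
Proof. by apply/tuple_permP; exists sg. Qed.

Lemma vsum_act sg s : vsum (act sg s) = vsum s.
Proof. by rewrite /vsum !(perm_sumn (perm_map _ (perm_eq_act sg s))). Qed.

Lemma sort_act (r : rel (nat * nat)) s : exists sg, sort r s = act sg s.
Proof. by apply/tuple_permP; rewrite perm_sort. Qed.

Lemma act_fixed_uniq sg s : uniq s -> act sg s = s -> sg = 1%g.
Proof.
move=> /tuple_uniqP s_inj s_fixed; apply/permP => i; rewrite perm1.
by apply: s_inj; rewrite -tnth_act s_fixed.
Qed.

End Configurations.

Section Operators.

Variables (R : numFieldType) (n : nat).
Local Notation cfg := (n.-tuple (nat * nat)).
Implicit Types (s t c : cfg) (i j : 'I_n) (f g : cfg -> R).
Implicit Types (m : nat * nat -> option (R * (nat * nat))).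

Definition step m f s i : R :=
  if m (tnth s i) is Some (w, y) then w * f (set_tnth s i y) else 0.

Definition op m f s : R := \sum_i step m f s i.

Lemma step_sum (I : finType) (g : I -> cfg -> R) m s i :
  step m (fun t => \sum_k g k t) s i = \sum_k step m (g k) s i.
Proof.
rewrite /step; case: (m _) => [[w y]|]; last by rewrite big1.
by rewrite mulr_sumr.
Qed.

Lemma step_scale (c : R) g m s i : step m (fun t => c * g t) s i = c * step m g s i.
Proof. by rewrite /step; case: (m _) => [[w y]|]; rewrite ?mulr0 // mulrCA. Qed.

Lemma op_lin (I : finType) (c : I -> R) (g : I -> cfg -> R) m s :
  op m (fun t => \sum_k c k * g k t) s = \sum_k c k * op m (g k) s.
Proof.
rewrite /op; under eq_bigr do rewrite step_sum.
rewrite exchange_big; apply: eq_bigr => k _.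
by rewrite mulr_sumr; apply: eq_bigr => i _; rewrite step_scale.
Qed.

Lemma op_scale (c : R) g m s : op m (fun t => c * g t) s = c * op m g s.
Proof. by rewrite /op mulr_sumr; apply: eq_bigr => i _; rewrite step_scale. Qed.

Lemma eq_op m f g : f =1 g -> op m f =1 op m g.
Proof.
by move=> fg s; apply: eq_bigr => i _; rewrite /step; case: (m _) => [[w y]|]; rewrite ?fg.
Qed.

Lemma op0 m s : op m (fun=> 0) s = 0.
Proof. by apply: big1 => i _; rewrite /step; case: (m _) => [[w y]|]; rewrite ?mulr0. Qed.

Lemma step_stepC m m' f s i j : i != j ->
  step m (fun t => step m' f t j) s i = step m' (fun t => step m f t i) s j.
Proof.
move=> ij; have ji : j != i by rewrite eq_sym.
rewrite /step; case Ei: (m (tnth s i)) => [[w y]|]; case Ej: (m' (tnth s j)) => [[w' y']|];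
  rewrite ?tnth_set_tnth ?(negbTE ij) ?(negbTE ji) ?Ei ?Ej ?mulr0 //.
by rewrite set_tnthC // mulrCA.
Qed.

Lemma op_commutator m m' f s :
  op m (op m' f) s - op m' (op m f) s =
  \sum_i (step m (fun t => step m' f t i) s i - step m' (fun t => step m f t i) s i).
Proof.
rewrite /op; under eq_bigr do rewrite step_sum.
under [X in _ - X]eq_bigr do rewrite step_sum.
rewrite [X in _ - X]exchange_big -sumrB; apply: eq_bigr => i _.
rewrite -sumrB (bigD1 i) //= big1 ?addr0 // => j ji.
by rewrite step_stepC ?subrr // eq_sym.
Qed.

Definition moveE (v : nat * nat) : option (R * (nat * nat)) :=
  if (0 < v.1)%N then Some (v.2.+1%:R, (v.1.-1, v.2.+1)) else None.

Definition moveF (v : nat * nat) : option (R * (nat * nat)) :=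
  if (0 < v.2)%N then Some (v.1.+1%:R, (v.1.+1, v.2.-1)) else None.

Local Notation opE := (op moveE).
Local Notation opF := (op moveF).

Definition weight s : R := (vsum s).1%:R - (vsum s).2%:R.

Lemma stepE_stepF_diag f s i :
  step moveE (fun t => step moveF f t i) s i = ((tnth s i).1 * (tnth s i).2.+1)%:R * f s.
Proof.
rewrite /step /moveE /moveF; case Esi: (tnth s i) => [[|a] b] /=; first by rewrite mul0r.
by rewrite tnth_set_tnth eqxx /= set_set_tnth -Esi set_tnth_id natrM mulrCA mulrA.
Qed.

Lemma stepF_stepE_diag f s i :
  step moveF (fun t => step moveE f t i) s i = ((tnth s i).1.+1 * (tnth s i).2)%:R * f s.
Proof.
rewrite /step /moveE /moveF; case Esi: (tnth s i) => [a [|b]] /=; first by rewrite muln0 mul0r.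
by rewrite tnth_set_tnth eqxx /= set_set_tnth -Esi set_tnth_id natrM mulrA.
Qed.

Lemma opE_opF_comm f s : opE (opF f) s - opF (opE f) s = weight s * f s.
Proof.
rewrite op_commutator /weight vsum_tuple /= !natr_sum -sumrB mulr_suml.
apply: eq_bigr => i _; rewrite stepE_stepF_diag stepF_stepE_diag.
case: (tnth s i) => a b /=; rewrite !natrM -!natr1; ring.
Qed.

Definition supported f X Y := forall s, f s != 0 -> vsum s = (X, Y).

Lemma opE_neq0 f X Y s : supported f X Y -> opE f s != 0 ->
  (0 < Y)%N /\ vsum s = (X.+1, Y.-1).
Proof.
move=> fXY /sum_neq0[i]; rewrite /step /moveE; case: ifP => [a_gt0 | _]; last by rewrite eqxx.
rewrite mulf_eq0 negb_or => /andP[_ /fXY vsum_t].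
have [] := vsum_set_tnth s i ((tnth s i).1.-1, (tnth s i).2.+1).
by rewrite vsum_t; case: (vsum s) => a b /= h1 h2; split; [|congr pair]; lia.
Qed.

Lemma opF_supported f X Y : supported f X.+1 Y -> supported (opF f) X Y.+1.
Proof.
move=> fXY s /sum_neq0[i]; rewrite /step /moveF; case: ifP => [b_gt0 | _]; last by rewrite eqxx.
rewrite mulf_eq0 negb_or => /andP[_ /fXY vsum_t].
have [] := vsum_set_tnth s i ((tnth s i).1.+1, (tnth s i).2.-1).
by rewrite vsum_t; case: (vsum s) => a b /= h1 h2; congr pair; lia.
Qed.

Lemma iter_opE_neq0 f X Y k s : supported f X Y -> iter k opE f s != 0 ->
  (k <= Y)%N /\ vsum s = (X + k, Y - k)%N.
Proof.
move=> fXY; elim: k s => [|k IH] s; first by rewrite addn0 subn0 => /fXY.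
have supp_k : supported (iter k opE f) (X + k) (Y - k) by move=> t /IH[].
by case/(opE_neq0 supp_k) => Yk ->; split; [|congr pair]; lia.
Qed.

Lemma weight_supported f X Y s : supported f X Y -> weight s * f s = (X%:R - Y%:R) * f s.
Proof. by move=> fXY; have [->|/fXY e] := eqVneq (f s) 0; rewrite ?mulr0 // /weight e. Qed.

Lemma opF_iter_opE f X Y : supported f X Y -> opF f =1 (fun=> 0) -> forall k s,
  opF (iter k.+1 opE f) s = - (k.+1%:R * (X%:R - Y%:R + k%:R)) * iter k opE f s.
Proof.
move=> fXY F0; elim=> [|k IH] s.
  have := opE_opF_comm f s; rewrite (eq_op _ F0) op0 (weight_supported _ fXY) /=.
  by move/eqP; rewrite sub0r eqr_oppLR => /eqP ->; ring.
have := opE_opF_comm (iter k.+1 opE f) s; rewrite (eq_op _ IH) op_scale.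
have -> : weight s * iter k.+1 opE f s = (X%:R - Y%:R + 2 * k.+1%:R) * iter k.+1 opE f s.
  have [->|/(iter_opE_neq0 fXY)[le_kY vs]] := eqVneq (iter k.+1 opE f s) 0; first by rewrite !mulr0.
  by rewrite /weight vs /= natrD natrB // -!natr1; ring.
move/eqP; rewrite subr_eq => /eqP comm.
apply: (addrI ((X%:R - Y%:R + 2 * k.+1%:R) * iter k.+1 opE f s)).
by rewrite -comm /= -!natr1; ring.
Qed.

Lemma lowest_weight_eq0 f X Y :
  supported f X Y -> (Y < X)%N -> opF f =1 (fun=> 0) -> f =1 (fun=> 0).
Proof.
move=> fXY ltYX F0.
(* E^(Y+1) f = 0, and the recurrence of [opF_iter_opE], whose coefficients are
   nonzero as X > Y, carries the vanishing down to E^0 f = f. *)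
suff iter0 d : iter (Y.+1 - d) opE f =1 (fun=> 0) by move=> s; have := iter0 Y.+1 s; rewrite subnn.
elim: d => [|d IH] s.
  by apply/eqP/negPn/negP; rewrite subn0 => /(iter_opE_neq0 fXY)[]; rewrite ltnn.
have [le_dY | lt_Yd] := leqP d Y; last by have -> : (Y.+1 - d.+1 = Y.+1 - d)%N by lia.
have := opF_iter_opE fXY F0 (Y - d) s; rewrite -subSn // (eq_op _ IH) op0 subSS.
move/esym/eqP; rewrite mulf_eq0 oppr_eq0 => /orP[|/eqP //].
by rewrite -natrB 1?ltnW // -!natrD -natrM pnatr_eq0 muln_eq0; lia.
Qed.

Definition equivariant (chi : {perm 'I_n} -> R) f := forall sg s, f (act sg s) = chi sg * f s.

Lemma op_equivariant chi m f : equivariant chi f -> equivariant chi (op m f).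
Proof.
move=> f_chi sg s; rewrite /op mulr_sumr [RHS](reindex_inj (@perm_inj _ sg)) /=.
apply: eq_bigr => i _; rewrite /step tnth_act.
by case: (m _) => [[w y]|]; rewrite ?mulr0 // set_tnth_act f_chi mulrCA.
Qed.

Definition symmetrized (chi : {perm 'I_n} -> R) c s : R :=
  \sum_(sg : {perm 'I_n}) if s == act sg c then chi sg else 0.

Lemma symmetrized_equivariant chi c :
  {morph chi : a b / (a * b)%g >-> a * b} -> equivariant chi (symmetrized chi c).
Proof.
move=> chiM tau s; rewrite /symmetrized mulr_sumr (reindex_inj (mulgI tau)) /=.
apply: eq_bigr => sg _; rewrite -act_mul (can_eq (actK tau)) chiM.
by case: ifP; rewrite ?mulr0.
Qed.

Lemma alternating_uniq g s : equivariant (fun sg => (-1) ^+ sg) g -> g s != 0 -> uniq s.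
Proof.
move=> g_alt gs_neq0; apply/tuple_uniqP => i j sij; apply/eqP; apply: contraNT gs_neq0 => ij.
have fixed : act (tperm i j) s = s.
  by apply: eq_from_tnth => k; rewrite tnth_act; case: tpermP => [->|->|].
have := g_alt (tperm i j) s; rewrite fixed odd_tperm ij expr1 mulN1r.
by move/eqP; rewrite eq_sym eqNr.
Qed.

Section Counting.

Variables (chi : {perm 'I_n} -> R) (Pr : rel (nat * nat)).
Hypothesis chiM : {morph chi : a b / (a * b)%g >-> a * b}.
Hypothesis Pr_lexle : subrel Pr lexle.
Hypothesis symmetrized_diag : forall c, sorted Pr c -> symmetrized chi c c != 0.
Hypothesis sortable :
  forall g, equivariant chi g -> forall s, g s != 0 -> exists sg, sorted Pr (act sg s).

(* Together these say that the [symmetrized chi c], for [c] sorted by [Pr], form a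
   basis of the [chi]-equivariant functions. *)

Lemma equivariant_eq0 g :
  equivariant chi g -> (forall c, sorted Pr c -> g c = 0) -> g =1 (fun=> 0).
Proof.
move=> g_chi g0 s; apply/eqP/negPn/negP => gs_neq0.
have [sg /g0 gs0] := sortable g_chi gs_neq0.
by move: gs_neq0; rewrite -(actK sg s) g_chi gs0 mulr0 eqxx.
Qed.

Lemma symmetrized_off c c' :
  sorted Pr c -> sorted Pr c' -> c != c' -> symmetrized chi c c' = 0.
Proof.
move=> /(sub_sorted Pr_lexle) c_sorted /(sub_sorted Pr_lexle) c'_sorted c'c.
apply: big1 => sg _; case: eqP => // c'_act; case/eqP: c'c; apply: val_inj.
apply: (sorted_eq lexle_trans lexle_anti c_sorted c'_sorted).
by rewrite c'_act perm_sym perm_eq_act.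
Qed.

Definition canonical x : {set n.-tuple (box x)} :=
  [set t : n.-tuple (box x) | sorted Pr (map (@vec_of x) t) && (vsum (map (@vec_of x) t) == x)].

Definition cfg_of x (t : n.-tuple (box x)) : cfg := map_tuple (@vec_of x) t.

Lemma cfg_of_inj x : injective (@cfg_of x).
Proof. by move=> t t' /(congr1 val) /(inj_map (@vec_of_inj x)) /val_inj. Qed.

Lemma canonical_sorted x (t : n.-tuple (box x)) : t \in canonical x -> sorted Pr (cfg_of t).
Proof. by rewrite inE => /andP[]. Qed.

Lemma canonical_cfg_of x c :
  sorted Pr c -> vsum c = x -> exists2 t, t \in canonical x & cfg_of t = c.
Proof.
move=> c_sorted vc.
have c_box v : v \in c -> (v.1 < x.1.+1)%N /\ (v.2 < x.2.+1)%N.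
  move=> /tnthP[i ->]; rewrite -vc vsum_tuple /= !ltnS.
  by split; rewrite (bigD1 i) //= leq_addr.
pose t := map_tuple (fun v => (inord v.1, inord v.2) : box x) c.
have tc : cfg_of t = c.
  apply: val_inj => /=; rewrite -map_comp -[RHS]map_id; apply/eq_in_map => v /c_box[v1 v2].
  by rewrite /= /vec_of /= !inordK // -surjective_pairing.
by exists t; rewrite // inE -[map _ t]/(val (cfg_of t)) tc c_sorted vc eqxx.
Qed.

Lemma card_canonical_le X Y :
  (Y <= X)%N -> (#|canonical (X.+1, Y)| <= #|canonical (X, Y.+1)|)%N.
Proof.
move=> le_YX.
rewrite -[#|canonical (X.+1, Y)|]card_sig -[#|canonical (X, Y.+1)|]card_sig.
pose M (a : {t | t \in canonical (X.+1, Y)}) (b : {t | t \in canonical (X, Y.+1)}) :=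
  opF (symmetrized chi (cfg_of (val a))) (cfg_of (val b)).
apply: (@leq_card_row_indep _ _ _ M) => u u_indep.
pose G s := \sum_a u a * symmetrized chi (cfg_of (val a)) s.
have G_chi : equivariant chi G.
  move=> sg s; rewrite /G mulr_sumr; apply: eq_bigr => a _.
  by rewrite symmetrized_equivariant // mulrCA.
have G_supp : supported G X.+1 Y.
  move=> s /sum_neq0[a]; rewrite mulf_eq0 negb_or => /andP[_ /sum_neq0[sg]].
  have [-> _|_] := eqVneq s (act sg (cfg_of (val a))); last by rewrite eqxx.
  by rewrite vsum_act; have := valP a; rewrite inE => /andP[_ /eqP].
have FG0 : opF G =1 (fun=> 0).
  apply: equivariant_eq0 (op_equivariant _ G_chi) _ => c c_sorted.
  have [vc | vc] := eqVneq (vsum c) (X, Y.+1); last first.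
    by apply/eqP/negPn/negP => /(opF_supported G_supp)/eqP; rewrite (negbTE vc).
  have [t t_can <-] := canonical_cfg_of c_sorted vc.
  by rewrite op_lin; apply: (u_indep (exist _ t t_can)).
have G0 := lowest_weight_eq0 G_supp le_YX FG0.
move=> a; have := G0 (cfg_of (val a)); rewrite /G (bigD1 a) //= big1 ?addr0 => [/eqP|b ba].
  by rewrite mulf_eq0 (negbTE (symmetrized_diag (canonical_sorted (valP a)))) orbF => /eqP.
rewrite symmetrized_off ?mulr0 ?canonical_sorted ?(valP a) ?(valP b) //.
by rewrite (inj_eq (@cfg_of_inj _)) (inj_eq val_inj).
Qed.

End Counting.

End Operators.

Close Scope ring_scope.


Lemma p_shift_le n X Y : Y <= X -> p n (X.+1, Y) <= p n (X, Y.+1).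
Proof.
move=> le_YX; apply: (@card_canonical_le rat n (fun=> 1%R) lexle) => //.
- move=> c _; rewrite /symmetrized -big_mkcond sumr_const mulrn_eq0 oner_eq0 orbF -lt0n.
  by apply/card_gt0P; exists 1%g; rewrite unfold_in act1; apply: eqxx.
- move=> g _ s _; have [sg sort_s] := sort_act lexle s.
  by exists sg; rewrite -sort_s; apply: sort_sorted lexle_total s.
Qed.

Lemma q_shift_le n X Y : Y <= X -> q n (X.+1, Y) <= q n (X, Y.+1).
Proof.
move=> le_YX; apply: (@card_canonical_le rat n (fun sg => (-1) ^+ sg)%R lexlt) => //.
- by move=> a b; rewrite odd_permM signr_addb.
- exact: lexlt_le.
- move=> c /(sorted_uniq lexlt_trans lexlt_irr) c_uniq.
  rewrite /symmetrized (bigD1 1%g) //= act1 eqxx odd_perm1 big1 ?addr0 ?oner_eq0 // => sg.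
  by apply: contraNeq => /eqP; case: eqP => // /esym/(act_fixed_uniq c_uniq) ->.
- move=> g g_alt s /(alternating_uniq g_alt) s_uniq; have [sg sort_s] := sort_act lexle s.
  by exists sg; rewrite -sort_s sorted_lexlt ?sort_uniq ?(sort_sorted lexle_total).
Qed.

Theorem corollary6 (x1 x2 n : nat) :
  1 <= x2 -> x2 <= x1 ->
  p n (x1.+1, x2.-1) <= p n (x1, x2) /\ q n (x1.+1, x2.-1) <= q n (x1, x2).
Proof.
move=> x2_gt0 le_x2x1; rewrite -[in p n (x1, x2)](prednK x2_gt0) -[in q n (x1, x2)](prednK x2_gt0).
by split; [apply: p_shift_le | apply: q_shift_le]; lia.
Qed.
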